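(* Let $\Omega=\{(U,V)\in\mathbb R^2:a<UV<b\}$ with $-\infty\le a<0<b\le\infty$, let $g,w:(a,b)\to\mathbb R$ be smooth functions, $e\neq0$ a constant, and $\tau^1,\tau^2,\tau^3$ the Pauli matrices. On $\mathcal M=\Omega\times S^2$, with $\vec n\in S^2\subset\mathbb R^3$ the unit vector, define the $\mathfrak{su}(2)$-valued $1$-form $$A^{(0)}=\frac{1}{2e}\Big[(\vec n\cdot\vec\tau)\,g(UV)\,(V\,dU-U\,dV)+(w(UV)-1)\,\epsilon_{ijk}\tau^i n^j\,dn^k\Big].$$ Let $J:\mathcal M\to\mathcal M$, $J(U,V,\vec n)=(V,U,-\vec n)$. Then $J^*A^{(0)}=A^{(0)}$. Consequently, for the four-dimensional spherically symmetric Einstein–$\mathrm{SU}(2)$ black hole written in this gauge with metric $-f(UV)\,dU\,dV+r(UV)^2d\Omega^2$, the quotient by $\{\mathrm{Id},J\}$ is a solution (a geon) with trivial gauge bundle.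
   Context: $d\Omega^2$ is the round unit-sphere metric; $J$ is a free involutive isometry of $-f(UV)\,dU\,dV+r(UV)^2d\Omega^2$ for any smooth positive $f,r$. The form $A^{(0)}$ is the gauge potential of the spherically symmetric Einstein–$\mathrm{SU}(2)$ black hole (Bjoraker–Hosotani notation) transformed to a gauge regular at the horizon and written in Kruskal coordinates. *)

From HB Require Import structures.
From mathcomp Require Import all_boot all_order all_algebra.
From mathcomp Require Import complex.
From mathcomp Require Import all_classical all_reals all_analysis.
Set Implicit Arguments. Unset Strict Implicit. Unset Printing Implicit Defensive.
Import Order.TTheory GRing.Theory Num.Theory.
Local Open Scope ring_scope.
Local Open Scope complex_scope.

Definition smooth_on (R : realType) (a b : \bar R) (f : R -> R) : Prop :=
  forall (k : nat) (x : R), (a < x%:E)%E -> (x%:E < b)%E ->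
    derivable (iter k (@derive1 R R) f) x 1.

Definition pauli (R : rcfType) (i : 'I_3) : 'M[R[i]]_2 :=
  \matrix_(r < 2, c < 2)
    (if val i == 0%N then (if r == c then 0 else 1)
     else if val i == 1%N then
       (if r == c then 0 else if val r == 0%N then - 'i else 'i)
     else (if r == c then (if val r == 0%N then 1 else -1) else 0)).

Definition levi (R : ringType) (i j k : 'I_3) : R :=
  if (i == j) || (j == k) || (k == i) then 0
  else if ((val i == 0%N) && (val j == 1%N)) || ((val i == 1%N) && (val j == 2%N))
          || ((val i == 2%N) && (val j == 0%N)) then 1 else -1.

Definition on_S2 (R : realType) (n : 'rV[R]_3) : Prop :=
  \sum_(i < 3) n 0 i ^+ 2 = 1.
Definition tangent_S2 (R : realType) (n dn : 'rV[R]_3) : Prop :=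
  \sum_(i < 3) n 0 i * dn 0 i = 0.

Definition in_M (R : realType) (a b : \bar R) (U V : R) (n : 'rV[R]_3) : Prop :=
  (a < (U * V)%:E)%E /\ ((U * V)%:E < b)%E /\ on_S2 n.

(* An su(2)-valued 1-form on Omega x S^2 is represented as a map sending a
   point (U,V,n) and a tangent vector (dU,dV,dn) to a 2x2 complex matrix. *)
Definition form1 (R : realType) :=
  R -> R -> 'rV[R]_3 -> R -> R -> 'rV[R]_3 -> 'M[R[i]]_2.

Definition A0 (R : realType) (e : R) (g w : R -> R) : form1 R :=
  fun U V n dU dV dn =>
    ((2 * e)^-1)%:C *:
      ( ((g (U * V) * (V * dU - U * dV))%:C *: \sum_(i < 3) (n 0 i)%:C *: pauli R i)
      + ((w (U * V) - 1)%:C *: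
          \sum_(i < 3) \sum_(j < 3) \sum_(k < 3)
             (levi R i j k * n 0 j * dn 0 k)%:C *: pauli R i) ).

(* The involution J(U,V,n) = (V,U,-n) and the pullback of a 1-form by J:
   (J^* A)_p(X) = A_{J p}(dJ_p X), with dJ(dU,dV,dn) = (dV,dU,-dn). *)
Definition Jmap (R : realType) (p : R * R * 'rV[R]_3) : R * R * 'rV[R]_3 :=
  let: (U, V, n) := p in (V, U, - n).
Definition pullback_J (R : realType) (A : form1 R) : form1 R :=
  fun U V n dU dV dn => A V U (- n) dV dU (- dn).

(* Both terms of A^(0) are even under J.  The coefficient g(UV) is symmetric in
   U and V, while n.tau and V dU - U dV both change sign, so their product is
   invariant; the second term is bilinear in (n, dn), which J maps to
   (-n, -dn).  The identity holds at every point and for every tangent vector. *)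

From HB Require Import structures.
From mathcomp Require Import all_boot all_order all_algebra.
From mathcomp Require Import complex.
From mathcomp Require Import all_classical all_reals all_analysis.
From mathcomp Require Import ring.
Set Implicit Arguments. Unset Strict Implicit. Unset Printing Implicit Defensive.
Import Order.TTheory GRing.Theory Num.Theory.
Local Open Scope ring_scope.
Local Open Scope complex_scope.

Definition pauli_dot (R : rcfType) (n : 'rV[R]_3) : 'M[R[i]]_2 :=
  \sum_(i < 3) (n 0 i)%:C *: pauli R i.

Definition pauli_cross (R : rcfType) (n dn : 'rV[R]_3) : 'M[R[i]]_2 :=
  \sum_(i < 3) \sum_(j < 3) \sum_(k < 3)
     (levi R i j k * n 0 j * dn 0 k)%:C *: pauli R i.

Lemma pauli_dotN (R : rcfType) (n : 'rV[R]_3) : pauli_dot (- n) = - pauli_dot n.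
Proof.
rewrite /pauli_dot -sumrN; apply: eq_bigr => i _.
by rewrite mxE rmorphN scaleNr.
Qed.

Lemma pauli_crossNN (R : rcfType) (n dn : 'rV[R]_3) :
  pauli_cross (- n) (- dn) = pauli_cross n dn.
Proof.
apply: eq_bigr => i _; apply: eq_bigr => j _; apply: eq_bigr => k _.
by rewrite !mxE [_ * - n 0 j]mulrN mulrNN.
Qed.

Lemma A0E (R : realType) (e : R) (g w : R -> R) U V n dU dV dn :
  A0 e g w U V n dU dV dn =
    ((2 * e)^-1)%:C *: ((g (U * V) * (V * dU - U * dV))%:C *: pauli_dot n
                        + (w (U * V) - 1)%:C *: pauli_cross n dn).
Proof. by []. Qed.

Lemma pullback_J_A0 (R : realType) (e : R) (g w : R -> R)
    (U V : R) (n : 'rV[R]_3) (dU dV : R) (dn : 'rV[R]_3) :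
  pullback_J (A0 e g w) U V n dU dV dn = A0 e g w U V n dU dV dn.
Proof.
rewrite /pullback_J !A0E pauli_dotN pauli_crossNN (mulrC V U).
have -> : g (U * V) * (U * dV - V * dU) = - (g (U * V) * (V * dU - U * dV)).
  by ring.
by rewrite rmorphN scaleNr scalerN opprK.
Qed.

Theorem mainTheorem7 (R : realType) (a b : \bar R) (g w : R -> R) (e : R) :
  (a < 0%E)%E -> (0%E < b)%E ->
  smooth_on a b g -> smooth_on a b w -> e != 0 ->
  forall (U V : R) (n : 'rV[R]_3) (dU dV : R) (dn : 'rV[R]_3),
    in_M a b U V n -> tangent_S2 n dn ->
    pullback_J (A0 e g w) U V n dU dV dn = A0 e g w U V n dU dV dn.
Proof. by move=> _ _ _ _ _ U V n dU dV dn _ _; apply: pullback_J_A0. Qed.
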